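(* Let $G$ be a finite nilpotent group of nilpotency class $2$ and let $w\in F_k$ be such that the word map $w:G^k\to G$ is surjective. Then $w$ is $F_k(G)$-automorphic to the word $x_1$, and $P_{w,G}(g)=|G|^{-1}$ for every $g\in G$; in particular $w$ satisfies the Amit–Ashurst bound $P_{w,G}(g)\ge|G|^{-1}$ for all $g\in G$.
   Context: $F_k$ is the free group on $x_1,\dots,x_k$; $P_{w,G}(g):=|\{(g_1,\dots,g_k)\in G^k: w(g_1,\dots,g_k)=g\}|/|G|^k$. The group $F_k(G)$ consists of the word maps $G^k\to G$ induced by elements of $F_k$, under pointwise multiplication; $w_1,w_2\in F_k$ are $F_k(G)$-automorphic if some group automorphism of $F_k(G)$ sends the word map of $w_1$ to that of $w_2$. *)

From mathcomp Require Import all_boot all_order all_algebra all_fingroup all_solvable.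
Set Implicit Arguments. Unset Strict Implicit. Unset Printing Implicit Defensive.

(* Elements of the free group F_k on x_1..x_k are represented by (not
   necessarily reduced) words: a letter (i, false) is x_(i+1), a letter
   (i, true) is x_(i+1)^-1.  The word map only depends on the free group
   element, since evaluation respects free reduction. *)
Definition word (k : nat) := seq ('I_k * bool).

Local Open Scope group_scope.

Section WordMaps.
Variables (gT : finGroupType) (k : nat).

Definition tup := {ffun 'I_k -> gT}.

Definition letter_eval (g : tup) (l : 'I_k * bool) : gT :=
  if l.2 then (g l.1)^-1 else g l.1.

Definition word_eval (w : word k) (g : tup) : gT :=
  foldr (fun l acc => letter_eval g l * acc) 1 (w).

Definition word_map (w : word k) : {ffun tup -> gT} := [ffun g => word_eval w g].

Definition pmul (f h : {ffun tup -> gT}) : {ffun tup -> gT} := [ffun g => f g * h g].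

(* membership in F_k(G): f is the word map of some word *)
Definition is_word_map (f : {ffun tup -> gT}) : Prop := exists w : word k, f = word_map w.

Definition FkG_automorphism (phi : {ffun tup -> gT} -> {ffun tup -> gT}) : Prop :=
  [/\ forall f, is_word_map f -> is_word_map (phi f),
      forall f h, is_word_map f -> is_word_map h -> phi f = phi h -> f = h,
      forall h, is_word_map h -> exists2 f, is_word_map f & phi f = h
    & forall f h, is_word_map f -> is_word_map h ->
        phi (pmul f h) = pmul (phi f) (phi h)].

Definition FkG_automorphic (w1 w2 : word k) : Prop :=
  exists phi, FkG_automorphism phi /\ phi (word_map w1) = word_map w2.

Definition Pw (w : word k) (g : gT) : rat :=
  (#|[set t : tup | word_eval w t == g]|%:R / (#|gT| ^ k)%:R)%R.

Definition word_surjective (w : word k) : Prop :=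
  forall g : gT, exists t : tup, word_eval w t = g.
End WordMaps.

Definition x1 (k : nat) (hk : (0 < k)%N) : word k := [:: (Ordinal hk, false)].

Arguments FkG_automorphic gT {k} w1 w2.
Arguments word_surjective gT {k} w.

From mathcomp Require Import all_boot all_order all_algebra all_fingroup all_solvable.
From mathcomp Require Import zify ring.
Import GRing.Theory Num.Theory.

Set Implicit Arguments.
Unset Strict Implicit.
Unset Printing Implicit Defensive.

(* Nielsen moves x_i |-> x_i x_j^(+-1) are bijective substitutions acting on the
   exponent sums of a word by elementary column operations, so Euclid's algorithm
   replaces w, up to such a substitution, by a word whose exponent sums vanish
   except at x_1, where it is some d.  When G' is central, w(t) = t_1^d mod G' and
   replacing t_1 by t_1 y with y in G' multiplies w(t) by y^d.  Surjectivity of w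
   makes d-th powering bijective on G/G'; as [x^m, y] = [x, y]^m in class 2, the
   exponent of G' divides m - 1 whenever a^m = a on G/G', so y^d = 1 forces y = 1
   on G'.  Hence t |-> (w(t), t_2, ..., t_k) is injective, i.e. w is the image of
   x_1 under a bijective substitution; that substitution induces an automorphism
   of F_k(G) and matches the fibres of w with those of x_1. *)

Local Open Scope group_scope.

Section Substitution.
Variables (gT : finGroupType) (k : nat).
Implicit Types (u v w : word k) (t : tup gT k) (s : 'I_k -> word k).

Lemma word_eval_cons l w t : word_eval (l :: w) t = letter_eval t l * word_eval w t.
Proof. by []. Qed.

Lemma word_eval_cat u v t : word_eval (u ++ v) t = word_eval u t * word_eval v t.
Proof.
elim: u => [|l u IHu]; first by rewrite mul1g.
by rewrite cat_cons !word_eval_cons IHu mulgA.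
Qed.

Definition word_inv w : word k := rev [seq (l.1, ~~ l.2) | l <- w].

Lemma word_eval_inv w t : word_eval (word_inv w) t = (word_eval w t)^-1.
Proof.
elim: w => [|[i b] w IHw]; first by rewrite invg1.
rewrite /word_inv /= rev_cons -cats1 word_eval_cat IHw !word_eval_cons mulg1 invMg.
by case: b; rewrite /letter_eval /= ?invgK.
Qed.

Definition var_word (i : 'I_k) : word k := [:: (i, false)].

Lemma word_eval_var i t : word_eval (var_word i) t = t i.
Proof. exact: mulg1. Qed.

Definition word_subst s w : word k :=
  flatten [seq if l.2 then word_inv (s l.1) else s l.1 | l <- w].

Definition subst_map s t : tup gT k := [ffun i => word_eval (s i) t].

Lemma word_eval_subst s w t : word_eval (word_subst s w) t = word_eval w (subst_map s t).
Proof.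
elim: w => [|[i b] w IHw] //.
rewrite word_eval_cons -IHw /word_subst /= word_eval_cat -/(word_subst s w).
by rewrite /letter_eval ffunE /=; case: b; rewrite ?word_eval_inv.
Qed.

Lemma subst_map_var t : subst_map var_word t = t.
Proof. by apply/ffunP=> i; rewrite ffunE word_eval_var. Qed.

Lemma subst_map_comp s1 s2 t :
  subst_map (word_subst s2 \o s1) t = subst_map s1 (subst_map s2 t).
Proof. by apply/ffunP=> i; rewrite !ffunE word_eval_subst. Qed.

Lemma subst_map_iter s n : exists s', subst_map s' =1 iter n (subst_map s).
Proof.
elim: n => [|n [s' IHn]]; first by exists var_word => t; rewrite subst_map_var.
by exists (word_subst s' \o s) => t; rewrite subst_map_comp IHn.
Qed.

(* The inverse of a bijective substitution is one of its iterates, hence given by words. *)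
Lemma subst_map_inv s : injective (subst_map s) ->
  exists s', cancel (subst_map s) (subst_map s') /\ cancel (subst_map s') (subst_map s).
Proof.
move=> inj_s; pose p := perm inj_s.
have [s' Es'] := subst_map_iter s #[p].-1.
have iter_order t : iter #[p] (subst_map s) t = t.
  rewrite -(eq_iter (f := p)) => [|u]; last by rewrite permE.
  by rewrite -permX expg_order perm1.
have p_gt0 := order_gt0 p.
by exists s'; split=> t; rewrite Es' -?iterSr -?iterS prednK.
Qed.

Definition subst_equiv u v :=
  exists2 s, injective (subst_map s) & forall t, word_eval v t = word_eval u (subst_map s t).

Lemma subst_equiv_refl w : subst_equiv w w.
Proof. by exists var_word => [t1 t2|t]; rewrite !subst_map_var. Qed.

Lemma subst_equiv_trans v u w : subst_equiv u v -> subst_equiv v w -> subst_equiv u w.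
Proof.
move=> [s1 inj1 E1] [s2 inj2 E2]; exists (word_subst s2 \o s1) => [t1 t2|t].
  by rewrite !subst_map_comp => /inj1 /inj2.
by rewrite E2 E1 subst_map_comp.
Qed.

Lemma subst_equiv_surjective u v :
  subst_equiv u v -> word_surjective gT u -> word_surjective gT v.
Proof.
move=> [s inj_s Euv] u_onto g; have [t <-] := u_onto g.
have [s' [_ K']] := subst_map_inv inj_s.
by exists (subst_map s' t); rewrite Euv K'.
Qed.

Definition tup_upd t (j : 'I_k) (v : gT) : tup gT k := [ffun i => if i == j then v else t i].

Definition pivot_subst w (i0 : 'I_k) (i : 'I_k) : word k :=
  if i == i0 then w else var_word i.

Lemma subst_map_pivot w i0 t : subst_map (pivot_subst w i0) t = tup_upd t i0 (word_eval w t).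
Proof.
apply/ffunP=> i; rewrite !ffunE /pivot_subst.
by case: eqP => // _; rewrite word_eval_var.
Qed.

Lemma subst_equiv_pivot w i0 :
  injective (subst_map (pivot_subst w i0)) -> subst_equiv w (var_word i0).
Proof.
move=> inj_p; have [s' [_ K']] := subst_map_inv inj_p.
exists s' => [|t]; first exact: can_inj K'.
rewrite word_eval_var; have /ffunP/(_ i0) := K' t.
by rewrite subst_map_pivot ffunE eqxx.
Qed.

End Substitution.

Section ExponentSums.
Variables (gT : finGroupType) (k : nat).
Local Open Scope ring_scope.
Implicit Types (w : word k) (s : 'I_k -> word k).

Definition exp_sum w (i : 'I_k) : int := \sum_(l <- w) (-1) ^+ l.2 * (l.1 == i)%:R.

Lemma exp_sum_cat u v i : exp_sum (u ++ v) i = exp_sum u i + exp_sum v i.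
Proof. exact: big_cat. Qed.

Lemma exp_sum_inv w i : exp_sum (word_inv w) i = - exp_sum w i.
Proof.
rewrite /exp_sum /word_inv big_rev big_map -sumrN.
by apply: eq_bigr => -[j []] _ /=; rewrite ?mulN1r ?mul1r ?opprK.
Qed.

Lemma exp_sum_subst s w i :
  exp_sum (word_subst s w) i = \sum_(l <- w) (-1) ^+ l.2 * exp_sum (s l.1) i.
Proof.
elim: w => [|[j b] w IHw]; first by rewrite /exp_sum !big_nil.
rewrite /word_subst /= exp_sum_cat -/(word_subst s w) IHw big_cons /=.
by case: b; rewrite ?exp_sum_inv ?mulN1r ?mul1r.
Qed.

Definition nielsen_move (i j : 'I_k) (b : bool) (l : 'I_k) : word k :=
  if l == i then [:: (i, false); (j, b)] else var_word l.

Lemma exp_sum_nielsen i j b w x :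
  exp_sum (word_subst (nielsen_move i j b) w) x
  = exp_sum w x + (j == x)%:R * (-1) ^+ b * exp_sum w i.
Proof.
rewrite exp_sum_subst /exp_sum big_distrr -big_split /=.
apply: eq_bigr => -[a c] _ /=; rewrite /nielsen_move /var_word.
case: eqP => [->|/eqP/negbTE ai]; rewrite !big_cons !big_nil /= ?eqxx ?ai; ring.
Qed.

Lemma nielsen_move_inj i j b : i != j -> injective (@subst_map gT k (nielsen_move i j b)).
Proof.
move=> ij t t' /ffunP E.
have E_off l : l != i -> t l = t' l.
  by move=> li; have := E l; rewrite !ffunE /nielsen_move (negbTE li) !word_eval_var.
apply/ffunP => l; have [->|] := eqVneq l i; last exact: E_off.
have := E i; rewrite !ffunE /nielsen_move eqxx !word_eval_cons /letter_eval /= !mulg1.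
rewrite (E_off j) 1?eq_sym //.
exact: mulIg.
Qed.

Lemma subst_equiv_nielsen i j b w : i != j ->
  subst_equiv gT w (word_subst (nielsen_move i j b) w).
Proof.
by move=> ij; exists (nielsen_move i j b); [exact: nielsen_move_inj | exact: word_eval_subst].
Qed.

End ExponentSums.

Section NielsenReduction.
Variables (gT : finGroupType) (k : nat).
Local Open Scope ring_scope.
Implicit Types (w : word k).

Lemma nielsen_reduce_pair i j w : i != j ->
  (`|exp_sum w i| <= `|exp_sum w j|)%N ->
  exists2 w1, subst_equiv gT w w1 &
    (forall x, x != j -> exp_sum w1 x = exp_sum w x)
    /\ `|exp_sum w1 j|%N = (`|exp_sum w j| - `|exp_sum w i|)%N.
Proof.
move=> ij le_ij; set b := 0 < exp_sum w i * exp_sum w j.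
exists (word_subst (nielsen_move i j b) w); first exact: subst_equiv_nielsen.
split=> [x /negbTE jx|]; rewrite exp_sum_nielsen ?eqxx.
  by rewrite eq_sym jx mulr0n !mul0r addr0.
by rewrite /b mulr1n mul1r; case: ltrP => /= sgn_ij; rewrite ?expr0 ?expr1; nia.
Qed.

(* The indicator term makes the copying step [e_i0 := e_l] from [e_i0 = 0] a progress. *)
Definition nielsen_measure (i0 : 'I_k) w : nat :=
  (2 * \sum_i `|exp_sum w i| + (exp_sum w i0 == 0))%N.

Lemma nielsen_measure_lt i0 l w w1 : l != i0 ->
  (forall x, x != i0 -> x != l -> exp_sum w1 x = exp_sum w x) ->
  (2 * (`|exp_sum w1 i0| + `|exp_sum w1 l|) + (exp_sum w1 i0 == 0) <
   2 * (`|exp_sum w i0| + `|exp_sum w l|) + (exp_sum w i0 == 0))%N ->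
  (nielsen_measure i0 w1 < nielsen_measure i0 w)%N.
Proof.
move=> li0 E; have split_sum (v : word k) : (\sum_i `|exp_sum v i|
    = `|exp_sum v i0| + `|exp_sum v l| + \sum_(i | (i != i0) && (i != l)) `|exp_sum v i|)%N.
  by rewrite (bigD1 i0) // (bigD1 l) //= addnA.
rewrite /nielsen_measure !split_sum.
have -> : (\sum_(i | (i != i0) && (i != l)) `|exp_sum w1 i|
          = \sum_(i | (i != i0) && (i != l)) `|exp_sum w i|)%N.
  by apply: eq_bigr => i /andP[? ?]; rewrite E.
by lia.
Qed.

Lemma nielsen_step i0 l w : l != i0 -> exp_sum w l != 0 ->
  exists2 w1, subst_equiv gT w w1 & (nielsen_measure i0 w1 < nielsen_measure i0 w)%N.
Proof.
move=> li0 el; have i0l : i0 != l by rewrite eq_sym.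
have [a0|a_neq0] := eqVneq (exp_sum w i0) 0.
  pose w1 := word_subst (nielsen_move l i0 false) w.
  have E1 x : exp_sum w1 x = exp_sum w x + (i0 == x)%:R * exp_sum w l.
    by rewrite exp_sum_nielsen expr0 mulr1.
  have [|w2 e2 [E2 abs2]] := @nielsen_reduce_pair i0 l w1 i0l.
    by rewrite !E1 eqxx (negbTE i0l) a0; lia.
  exists w2; first exact: subst_equiv_trans (subst_equiv_nielsen _ _ _ li0) e2.
  apply: (nielsen_measure_lt li0) => [x xi0 xl|].
    by rewrite E2 // E1 eq_sym (negbTE xi0) mul0r addr0.
  by rewrite E2 // abs2 !E1 eqxx (negbTE i0l) a0; lia.
have [le_al|lt_la] := leqP `|exp_sum w i0| `|exp_sum w l|.
  have [w1 e1 [E1 abs1]] := nielsen_reduce_pair i0l le_al.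
  exists w1 => //; apply: (nielsen_measure_lt li0) => [x _ xl|]; first exact: E1.
  by rewrite abs1 (E1 i0 i0l); lia.
have [w1 e1 [E1 abs1]] := nielsen_reduce_pair li0 (ltnW lt_la).
exists w1 => //; apply: (nielsen_measure_lt li0) => [x xi0 _|]; first exact: E1.
by rewrite abs1 (E1 l li0) (negbTE a_neq0); lia.
Qed.

Lemma nielsen_reduction i0 w :
  exists2 w', subst_equiv gT w w' & forall l, l != i0 -> exp_sum w' l = 0.
Proof.
have [n] := ubnP (nielsen_measure i0 w); elim: n w => // n IHn w /ltnSE le_w_n.
case: (pickP [pred l | (l != i0) && (exp_sum w l != 0)]) => [l /andP[li0 el]|none].
  have [w1 e1 lt1] := nielsen_step li0 el.
  have [|w' e' z'] := IHn w1; first exact: leq_trans lt1 le_w_n.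
  by exists w' => //; exact: subst_equiv_trans e1 e'.
exists w; first exact: subst_equiv_refl.
by move=> l li0; apply/eqP; have := none l; rewrite /= li0 => /negbFE.
Qed.

End NielsenReduction.

(* Integer powers of an element whose order divides [M]. *)
Definition expgz (aT : finGroupType) (M : nat) (y : aT) (z : int) : aT :=
  y ^+ `|(z %% M)%Z|.

Section IntPower.
Variables (aT : finGroupType) (M : nat) (y : aT).
Hypotheses (M_gt0 : (0 < M)%N) (yM : y ^+ M = 1).

Lemma expgz_nat (n : nat) : expgz M y n = y ^+ n.
Proof. by rewrite /expgz modz_nat absz_nat expg_mod. Qed.

Lemma expgzD a b : expgz M y (a + b)%R = expgz M y a * expgz M y b.
Proof.
have M_neq0 : (M%:Z != 0)%R by rewrite eqz_nat -lt0n.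
rewrite /expgz -expgD -[RHS](expg_mod _ yM); congr (_ ^+ _).
by apply/eqP; rewrite -eqz_nat -modz_nat PoszD !abszE !ger0_norm ?modz_ge0 ?modzDm.
Qed.

Lemma expgzN1 : expgz M y (-1)%R = y^-1.
Proof.
by apply: (mulIg y); rewrite mulVg -[X in _ * X]expg1 -expgz_nat -expgzD addNr expgz_nat.
Qed.

End IntPower.

Section CoordinateChange.
Variables (aT : finGroupType) (k : nat).
Implicit Types (w : word k) (t : tup aT k).

Lemma word_eval_upd_central M t j y w :
  (0 < M)%N -> y ^+ M = 1 -> (forall x, commute x y) ->
  word_eval w (tup_upd t j (t j * y)) = word_eval w t * expgz M y (exp_sum w j).
Proof.
move=> M_gt0 yM cy; elim: w => [|[a c] w IHw].
  by rewrite /exp_sum big_nil expgz_nat // mulg1.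
rewrite !word_eval_cons IHw /exp_sum big_cons -/(exp_sum w j) expgzD //.
rewrite /letter_eval ffunE /=; have [->|_] := eqVneq a j; last first.
  by rewrite mulr0 expgz_nat // mul1g mulgA.
case: c; rewrite mulr1 /= ?expgzN1 ?expr1 ?expgz_nat // ?expg1.
  by rewrite [RHS]mulgA (commuteV (cy _)) invMg !mulgA.
by rewrite [RHS]mulgA -[t j * _ * y]mulgA (cy (word_eval w t)) !mulgA.
Qed.

Lemma word_eval1 w : word_eval w ([ffun=> 1] : tup aT k) = 1.
Proof.
elim: w => [|[a c] w IHw] //.
rewrite word_eval_cons IHw /letter_eval ffunE mulg1.
by case: c; rewrite ?invg1.
Qed.

Lemma word_eval_abelian M w (i0 : 'I_k) t :
  (0 < M)%N -> (forall y : aT, y ^+ M = 1) -> (forall x y : aT, commute x y) ->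
  (forall l, l != i0 -> exp_sum w l = 0%R) ->
  word_eval w t = expgz M (t i0) (exp_sum w i0).
Proof.
move=> M_gt0 aM cA w_i0.
have central_upd (u : tup aT k) l y : word_eval w (tup_upd u l (u l * y))
                         = word_eval w u * expgz M y (exp_sum w l).
  by apply: word_eval_upd_central => // x; exact: cA.
have upd_off (u : tup aT k) l v : l != i0 -> word_eval w (tup_upd u l v) = word_eval w u.
  move=> li0; rewrite -[v](mulKVg (u l)) central_upd w_i0 //.
  by rewrite expgz_nat ?mulg1.
have erase (r : seq 'I_k) : i0 \notin r ->
    word_eval w [ffun i => if i \in r then 1 else t i] = word_eval w t.
  elim: r => [|j r IHr]; first by move=> _; congr word_eval; apply/ffunP => i; rewrite ffunE.
  rewrite in_cons negb_or => /andP[i0j i0r].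
  have -> : [ffun i => if i \in j :: r then 1 else t i]
          = tup_upd [ffun i => if i \in r then 1 else t i] j 1.
    by apply/ffunP => i; rewrite !ffunE in_cons; case: eqP.
  by rewrite upd_off 1?eq_sym // IHr.
rewrite -(erase [seq i <- enum 'I_k | i != i0]); last by rewrite mem_filter eqxx.
have -> : [ffun i => if i \in [seq i <- enum 'I_k | i != i0] then 1 else t i]
        = tup_upd [ffun=> 1] i0 (([ffun=> 1] : tup aT k) i0 * t i0).
  apply/ffunP => i; rewrite !ffunE mem_filter mem_enum andbT mul1g.
  by case: eqP => [->|].
by rewrite central_upd word_eval1 mul1g.
Qed.

End CoordinateChange.

Lemma expn_fixed_iter (aT : finGroupType) (D : nat) : injective (fun a : aT => a ^+ D) ->
  exists2 r, (0 < r)%N & forall a : aT, a ^+ (D ^ r) = a.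
Proof.
move=> inj_D; pose p := perm inj_D; exists #[p]; first exact: order_gt0.
move=> a; have iter_p n : iter n p a = a ^+ (D ^ n).
  by elim: n => [|n IHn] /=; rewrite ?expg1 // IHn permE expnSr expgM.
by rewrite -iter_p -permX expg_order perm1.
Qed.

Lemma onto_injF (T : finType) (f : T -> T) : (forall y, exists x, f x = y) -> injective f.
Proof.
move=> f_onto; have gP y : exists x, f x == y by have [x <-] := f_onto y; exists x.
pose g y := xchoose (gP y); have gK : cancel g f := fun y => eqP (xchooseP (gP y)).
have [g' g'K gK'] := injF_bij (can_inj gK).
by move=> x1 x2; rewrite -[x1]gK' -[x2]gK' !gK => ->.
Qed.

Section ClassTwo.
Variable gT : finGroupType.
Hypothesis cl2 : (nil_class [set: gT] <= 2)%N.
Local Notation G' := ([set: gT]%G^`(1))%G.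
Local Notation q := (coset G').

Lemma der1_central x y : x \in G' -> commute x y.
Proof.
move: cl2; rewrite nil_class2 => /subsetP sG'Z /sG'Z /centerP[_ cxG].
exact: cxG (in_setT y).
Qed.

Lemma der1_norm x : x \in 'N(G').
Proof. exact: subsetP (der_norm 1 _) x (in_setT x). Qed.

Lemma coset_der1M x y : q (x * y) = q x * q y.
Proof. exact: morphM (der1_norm x) (der1_norm y). Qed.

Lemma coset_der1V x : q x^-1 = (q x)^-1.
Proof. exact: morphV (der1_norm x). Qed.

Lemma coset_der1X x n : q (x ^+ n) = q x ^+ n.
Proof. exact: morphX (der1_norm x). Qed.

Lemma coset_der1_commute (a b : coset_of G') : commute a b.
Proof.
rewrite -(coset_reprK a) -(coset_reprK b).
have /centsP cQ := sub_der1_abelian (subxx G').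
by apply: cQ; apply: mem_quotient; rewrite in_setT.
Qed.

Lemma coset_word_eval k (w : word k) t :
  q (word_eval w t) = word_eval w [ffun i => q (t i)].
Proof.
elim: w => [|[a c] w IHw]; first exact: morph1.
rewrite !word_eval_cons coset_der1M IHw /letter_eval ffunE.
by case: c => //=; rewrite coset_der1V.
Qed.

Lemma der1_expn_trivial m : (forall x : gT, x ^+ m \in G') -> forall y, y \in G' -> y ^+ m = 1.
Proof.
move=> xm; apply/exponentP.
have cC : abelian (commg_set [set: gT] [set: gT]).
  by rewrite -abelian_gen; apply/centsP => x x' y _; exact: der1_central.
have -> : exponent G' = exponent (commg_set [set: gT] [set: gT]).
  exact: abelian_exponent_gen.
apply/exponentP => _ /imset2P[x y _ _ ->].
have cx : commute x [~ x, y].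
  by apply: commute_sym; apply: der1_central; rewrite mem_commg ?in_setT.
by rewrite -commXg //; apply/eqP/commgP; apply: der1_central.
Qed.

Local Notation N := #|[set: gT]|.

Lemma coset_der1_expN (a : coset_of G') : a ^+ N = 1.
Proof. by rewrite -(coset_reprK a) -coset_der1X expg_cardG ?in_setT ?morph1. Qed.

Variables (k : nat) (w : word k) (i0 : 'I_k).
Hypotheses (w_onto : word_surjective gT w) (w_i0 : forall l, l != i0 -> exp_sum w l = 0%R).
Local Notation D := `|(exp_sum w i0 %% N)%Z|.

Lemma coset_word_eval_pivot t : q (word_eval w t) = q (t i0) ^+ D.
Proof.
rewrite coset_word_eval (word_eval_abelian (M := N) (i0 := i0)) ?ffunE //.
  exact: coset_der1_expN.
exact: coset_der1_commute.
Qed.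

Lemma word_eval_pivot_der1 t y : y \in G' ->
  word_eval w (tup_upd t i0 (t i0 * y)) = word_eval w t * y ^+ D.
Proof.
move=> y'; apply: word_eval_upd_central; first exact: cardG_gt0.
  by rewrite expg_cardG ?in_setT.
by move=> x; apply: commute_sym; apply: der1_central.
Qed.

Lemma coset_expn_pivot_inj : injective (fun a : coset_of G' => a ^+ D).
Proof.
apply: onto_injF => a; have [t Et] := w_onto (repr a).
by exists (q (t i0)); rewrite -coset_word_eval_pivot Et coset_reprK.
Qed.

(* With m := D^r + |G|, powering by m fixes G/G' and kills the y with y^D = 1. *)
Lemma der1_expn_pivot_trivial y : y \in G' -> y ^+ D = 1 -> y = 1.
Proof.
move=> y' yD; have [r r_gt0 Dr] := expn_fixed_iter coset_expn_pivot_inj.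
pose m := (D ^ r + N)%N.
have m_gt0 : (0 < m)%N by rewrite addn_gt0 cardG_gt0 orbT.
have x_m x : x ^+ m.-1 \in G'.
  apply: coset_idr; first exact: der1_norm.
  apply: (mulIg (q x)).
  by rewrite mul1g -coset_der1M -expgSr prednK // coset_der1X expgD coset_der1_expN mulg1 Dr.
have : y ^+ m = 1.
  by rewrite expgD expg_cardG ?in_setT // mulg1 -(prednK r_gt0) expnS expgM yD expg1n.
by rewrite -(prednK m_gt0) expgSr (der1_expn_trivial x_m y') mul1g.
Qed.

Lemma pivot_subst_inj : injective (@subst_map gT k (pivot_subst w i0)).
Proof.
move=> t t'; rewrite !subst_map_pivot => /ffunP E.
have E_off i : i != i0 -> t i = t' i.
  by move=> ii0; have := E i; rewrite !ffunE (negbTE ii0).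
have Ew : word_eval w t = word_eval w t' by have := E i0; rewrite !ffunE eqxx.
pose y := (t i0)^-1 * t' i0.
have Et' : t' = tup_upd t i0 (t i0 * y).
  apply/ffunP=> i; rewrite ffunE mulKVg.
  by case: eqVneq => [->|/E_off].
have y' : y \in G'.
  apply: coset_idr; first exact: der1_norm.
  have: q (word_eval w t) = q (word_eval w t') by rewrite Ew.
  rewrite coset_der1M coset_der1V !coset_word_eval_pivot => /coset_expn_pivot_inj ->.
  exact: mulVg.
have yD : y ^+ D = 1.
  by apply: (mulgI (word_eval w t)); rewrite -word_eval_pivot_der1 // -Et' -Ew mulg1.
rewrite Et' (der1_expn_pivot_trivial y' yD) mulg1.
by apply/ffunP=> i; rewrite ffunE; case: eqP => [->|].
Qed.

End ClassTwo.

Lemma class2_subst_equiv_var (gT : finGroupType) k (w : word k) (i0 : 'I_k) :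
  (nil_class [set: gT] <= 2)%N -> word_surjective gT w -> subst_equiv gT w (var_word i0).
Proof.
move=> cl2 w_onto; have [w' ww' w'_i0] := nielsen_reduction gT i0 w.
have w'_onto := subst_equiv_surjective ww' w_onto.
exact: subst_equiv_trans ww' (subst_equiv_pivot (pivot_subst_inj cl2 w'_onto w'_i0)).
Qed.

Section Consequences.
Variables (gT : finGroupType) (k : nat).

Lemma subst_equiv_FkG_automorphic (u v : word k) :
  subst_equiv gT u v -> FkG_automorphic gT u v.
Proof.
move=> [s inj_s Euv]; have [s' [sK s'K]] := subst_map_inv inj_s.
exists (fun F : {ffun tup gT k -> gT} => [ffun t => F (subst_map s t)]); split; last first.
  by apply/ffunP => t; rewrite !ffunE Euv.
split.
- move=> _ [x ->]; exists (word_subst s x).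
  by apply/ffunP => t; rewrite !ffunE word_eval_subst.
- move=> f h _ _ /ffunP E; apply/ffunP => t.
  by have := E (subst_map s' t); rewrite !ffunE s'K.
- move=> _ [x ->]; exists (word_map gT (word_subst s' x)); first by exists (word_subst s' x).
  by apply/ffunP => t; rewrite !ffunE word_eval_subst sK.
- by move=> f h _ _; apply/ffunP => t; rewrite /pmul !ffunE.
Qed.

Lemma card_fibre_subst_equiv (u v : word k) (g : gT) : subst_equiv gT u v ->
  #|[set t : tup gT k | word_eval v t == g]| = #|[set t : tup gT k | word_eval u t == g]|.
Proof.
move=> [s inj_s Euv]; rewrite -[RHS](card_preimset _ inj_s).
by apply: eq_card => t; rewrite !inE Euv.
Qed.

Lemma card_var_fibre (i0 : 'I_k) (g : gT) :
  #|[set t : tup gT k | word_eval (var_word i0) t == g]| = (#|gT| ^ k.-1)%N.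
Proof.
pose F i : pred gT := if i == i0 then pred1 g else predT.
rewrite (@eq_card _ _ (family F)) => [|t]; last first.
  rewrite inE word_eval_var; apply/eqP/familyP => [tg i|/(_ i0)]; rewrite /F.
    by case: eqP => [->|] //=; rewrite inE tg.
  by rewrite eqxx inE => /eqP.
rewrite card_family foldrE big_map big_enum /= (bigD1 i0) //= {1}/F eqxx card1 mul1n.
rewrite (eq_bigr (fun=> #|gT|)) => [|i /negbTE]; last by rewrite /F => ->.
by rewrite prod_nat_const cardC1 card_ord.
Qed.

End Consequences.

Theorem corollary3p6 (gT : finGroupType) (k : nat) (hk : (0 < k)%N) (w : word k) :
  nilpotent [set: gT] -> nil_class [set: gT] = 2 ->
  word_surjective gT w ->
  [/\ FkG_automorphic gT w (x1 hk),
      (forall g : gT, Pw w g = (#|gT|%:R)^-1)%R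
    & (forall g : gT, (#|gT|%:R)^-1 <= Pw w g)%R].
Proof.
(* Class at most 2 already means G' <= Z(G). *)
move=> _ cl w_onto; have cl2 : (nil_class [set: gT] <= 2)%N by rewrite cl.
have ew := class2_subst_equiv_var (Ordinal hk) cl2 w_onto.
have Pw_eq (g : gT) : Pw w g = (#|gT|%:R)^-1%R.
  rewrite /Pw -(card_fibre_subst_equiv g ew) card_var_fibre -{2}(prednK hk) expnSr.
  rewrite natrM invfM mulrA divff ?mul1r // pnatr_eq0 -lt0n expn_gt0.
  by rewrite -cardsT cardG_gt0.
split=> [|//|g]; first exact: subst_equiv_FkG_automorphic ew.
by rewrite Pw_eq.
Qed.
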